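(* Let $q\in\Delta_1^m$ be a prior with $q_s>0$ for all $s\in[m]$, and assume $\mathcal{W}^{\theta_1}\neq\mathcal{W}^{\theta_2}$. Then there exists a signalling scheme $\Phi\in\mathbb{R}^{m\times m}$ (column-stochastic, with $m$ signals) that is $q$-identifying, i.e. $\mathcal{Q}_\Phi=\{q\}$.
   Context: Let $\mathcal{G}=(\mathcal{V},\mathcal{E})$ be a finite directed graph with an origin $v_o$ and a destination $v_d$, and let $\mathcal{P}$ be the (finite) set of acyclic directed paths from $v_o$ to $v_d$, $n=|\mathcal{P}|$. The set of feasible path-flows is $\mathcal{H}=\{f\in\mathbb{R}^n_{\ge0}:\sum_{p\in\mathcal{P}}f_p=1\}$. For a path-flow $f$, the flow on edge $e_k$ is $f_{e_k}=\sum_{p\ni e_k}f_p$. There is a finite set of states $\Theta=\{\theta_1,\dots,\theta_m\}$, $m\ge2$; in each state $\theta_s$ each edge $e_k$ has a known cost function $C^{\theta_s}_{e_k}:\mathbb{R}_{\ge0}\to\mathbb{R}_{\ge0}$ that is continuous and strictly increasing. The cost of path $p$ in state $\theta_s$ is $C^{\theta_s}_p(f)=\sum_{e_k\in p}C^{\theta_s}_{e_k}(f_{e_k})$. For $\varphi\in\Delta_1^m:=\{x\in\mathbb{R}^m_{\ge0}:\sum_i x_i=1\}$ the expected cost of path $p$ is $C^\varphi_p(f)=\sum_{s}\varphi_sC^{\theta_s}_p(f)$. A flow $f\in\mathcal{H}$ is a $\varphi$-based Wardrop equilibrium ($\varphi$-WE) if for all $p$ with $f_p>0$ we have $C^\varphi_p(f)\le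 C^\varphi_r(f)$ for all $r\in\mathcal{P}$; $\mathcal{W}^\varphi$ denotes the set of $\varphi$-WE. For each $s$, $\varphi^{\theta_s}$ is the distribution with $\varphi^{\theta_s}_s=1$ and $\mathcal{W}^{\theta_s}:=\mathcal{W}^{\varphi^{\theta_s}}$. A (public) signalling scheme with signals $\zeta^1,\dots,\zeta^z$ is a column-stochastic matrix $\Phi=(\phi^u_s)\in\mathbb{R}^{z\times m}_{\ge0}$, where $\phi^u_s$ is the probability of sending $\zeta^u$ in state $\theta_s$. Given the prior $q$, the posterior after $\zeta^u$ (when $\sum_\ell\phi^u_\ell q_\ell>0$) is $\widetilde q^{\zeta^u}_s=\phi^u_sq_s/\sum_\ell\phi^u_\ell q_\ell$, and the observed flow under $\zeta^u$ is some $\widetilde f^{\zeta^u}\in\mathcal{W}^{\widetilde q^{\zeta^u}}$. The set $\mathcal{Q}_\Phi$ consists of all $\psi\in\Delta_1^m$ such that for every signal $u$ (with $\sum_\ell\phi^u_\ell q_\ell>0$): $\sum_s\phi^u_s(C^{\theta_s}_p(\widetilde f^{\zeta^u})-C^{\theta_s}_r(\widetilde f^{\zeta^u}))\psi_s=0$ for all $p,r$ with $\widetilde f^{\zeta^u}_p,\widetilde f^{\zeta^u}_r>0$, and $\sum_s\phi^u_s(C^{\theta_s}_p(\widetilde f^{\zeta^u})-C^{\theta_s}_r(\widetilde f^{\zeta^u}))\psi_s\le0$ for all $p,r$ with $\widetilde f^{\zeta^u}_p>0$, $\widetilde f^{\zeta^u}_r=0$. (This set does not depend on which posterior-WE are observed.)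 $\Phi$ is called $q$-identifying if $\mathcal{Q}_\Phi=\{q\}$. *)

From HB Require Import structures.
From mathcomp Require Import all_boot all_order all_algebra.
From mathcomp Require Import all_classical all_reals all_analysis.

Set Implicit Arguments.
Unset Strict Implicit.
Unset Printing Implicit Defensive.

Import Order.TTheory GRing.Theory Num.Theory.
Import numFieldNormedType.Exports.
Local Open Scope classical_set_scope.
Local Open Scope ring_scope.

Section Paths.
Variables (V : finType) (adj : rel V) (vo vd : V).

Definition od_path (s : seq V) : bool :=
  if s is x :: p then [&& x == vo, path adj x p, last x p == vd & uniq s]
  else false.

Definition seqs_upto (k : nat) : seq (seq V) :=
  flatten [seq [seq tval t | t <- enum {: j.-tuple V}] | j <- iota 0 k.+1].

(* an acyclic path has at most #|V| vertices, so this lists all of them *)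
Definition od_paths : seq (seq V) :=
  undup [seq s <- seqs_upto #|V| | od_path s].

Definition Path : finType := seq_sub od_paths.

Definition pedges (p : Path) : seq (V * V) := zip (val p) (behead (val p)).

End Paths.

Section Routing.
Variables (R : realType) (V : finType) (adj : rel V) (vo vd : V) (m : nat).

Local Notation P := (Path adj vo vd).

Definition edge_flow (f : P -> R) (u w : V) : R :=
  \sum_(p : P | (u, w) \in pedges p) f p.

(* cost functions: C s u w is the cost on edge (u,w) in state s *)
Variable C : 'I_m -> V -> V -> R -> R.

Definition valid_costs : Prop :=
  forall (s : 'I_m) (u w : V), adj u w ->
    [/\ {within [set x : R | 0 <= x], continuous (C s u w)},
        (forall x, 0 <= x -> 0 <= C s u w x) &
        (forall x y, 0 <= x -> x < y -> C s u w x < C s u w y)].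

Definition path_cost (s : 'I_m) (f : P -> R) (p : P) : R :=
  \sum_(e <- pedges p) C s e.1 e.2 (edge_flow f e.1 e.2).

Definition is_dist (phi : 'I_m -> R) : Prop :=
  (forall s, 0 <= phi s) /\ \sum_(s < m) phi s = 1.

Definition exp_cost (phi : 'I_m -> R) (f : P -> R) (p : P) : R :=
  \sum_(s < m) phi s * path_cost s f p.

Definition feasible (f : P -> R) : Prop :=
  (forall p, 0 <= f p) /\ \sum_(p : P) f p = 1.

Definition is_WE (phi : 'I_m -> R) (f : P -> R) : Prop :=
  feasible f /\
  forall p : P, 0 < f p -> forall r : P, exp_cost phi f p <= exp_cost phi f r.

Definition state_dist (s : 'I_m) : 'I_m -> R := fun t => (t == s)%:R.

Definition WE_state (s : 'I_m) (f : P -> R) : Prop := is_WE (state_dist s) f.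

(* column-stochastic z x m signalling matrix: Phi u s = phi^u_s *)
Definition col_stochastic (z : nat) (Phi : 'M[R]_(z, m)) : Prop :=
  (forall u s, 0 <= Phi u s) /\ forall s, \sum_(u < z) Phi u s = 1.

Definition sig_prob (z : nat) (Phi : 'M[R]_(z, m)) (q : 'I_m -> R) (u : 'I_z) : R :=
  \sum_(l < m) Phi u l * q l.

Definition posterior (z : nat) (Phi : 'M[R]_(z, m)) (q : 'I_m -> R) (u : 'I_z)
  : 'I_m -> R := fun s => Phi u s * q s / sig_prob Phi q u.

Definition observed_flows (z : nat) (Phi : 'M[R]_(z, m)) (q : 'I_m -> R)
  (ftil : 'I_z -> P -> R) : Prop :=
  forall u, 0 < sig_prob Phi q u -> is_WE (posterior Phi q u) (ftil u).

Definition cost_gap (z : nat) (Phi : 'M[R]_(z, m)) (ftil : 'I_z -> P -> R)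
  (psi : 'I_m -> R) (u : 'I_z) (p r : P) : R :=
  \sum_(s < m) Phi u s *
     (path_cost s (ftil u) p - path_cost s (ftil u) r) * psi s.

Definition in_Q (z : nat) (Phi : 'M[R]_(z, m)) (q : 'I_m -> R)
  (ftil : 'I_z -> P -> R) (psi : 'I_m -> R) : Prop :=
  is_dist psi /\
  forall u, 0 < sig_prob Phi q u ->
    forall p r : P, 0 < ftil u p ->
      (0 < ftil u r -> cost_gap Phi ftil psi u p r = 0) /\
      (ftil u r = 0 -> cost_gap Phi ftil psi u p r <= 0).

Definition q_identifying (z : nat) (Phi : 'M[R]_(z, m)) (q : 'I_m -> R) : Prop :=
  forall ftil : 'I_z -> P -> R, observed_flows Phi q ftil ->
    forall psi : 'I_m -> R, in_Q Phi q ftil psi <-> psi =1 q.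

End Routing.

(* theta_1 and theta_2 as the first two states, given 1 < m *)
Definition theta1 (m : nat) (hm : (1 < m)%N) : 'I_m := Ordinal (ltnW hm).
Definition theta2 (m : nat) (hm : (1 < m)%N) : 'I_m := Ordinal hm.

(* For two states [j <> u], all Wardrop equilibria of a mixed belief
   [t * theta_u + (1 - t) * theta_j] have the same edge flows, so the parameters [t]
   at which a given equilibrium remains an equilibrium form closed intervals that
   partition [[0, 1]]; the hypothesis [W^theta_1 <> W^theta_2] makes this partition
   nontrivial.  Since [[0, 1]] is not a countable union of two or more disjoint
   closed intervals (Sierpinski), some [p] in [(0, 1)] is rigid: an equilibrium of
   the [p]-mixture is an equilibrium of no other mixture.
   Pair every state [v <> theta_1] with [J v], one of [theta_1, theta_2] whose
   equilibria differ from those of [v], and send signal [v] only in states [v] and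
   [J v], so that its posterior is the rigid mixture.  A belief [psi] consistent with
   the observed flow makes it an equilibrium of the [psi]-reweighted mixture, so by
   rigidity [psi_v : psi_(J v) = q_v : q_(J v)]; these ratios connect every state to
   [theta_1], hence [psi = q]. *)

From HB Require Import structures.
From mathcomp Require Import all_boot all_order all_algebra.
From mathcomp Require Import all_classical all_reals all_analysis.
From mathcomp Require Import ring lra.
Import Order.TTheory GRing.Theory Num.Theory.
Local Open Scope ring_scope.
Set Implicit Arguments.
Unset Strict Implicit.
Unset Printing Implicit Defensive.

Section IntervalPartition.
Variable R : realType.
Variable K : R -> R -> Prop.

(* [K x] is the class of [x] in a partition of [[0, 1]] into closed intervals. *)
Hypothesis class_sub01 : forall x t : R, K x t -> 0 <= t <= 1.
Hypothesis class_refl : forall x : R, 0 <= x <= 1 -> K x x.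
Hypothesis class_convex :
  forall x t1 t2 t : R, K x t1 -> K x t2 -> t1 <= t -> t <= t2 -> K x t.
Hypothesis class_closed : forall x t : R, 0 <= x <= 1 -> 0 <= t <= 1 -> ~ K x t ->
  exists2 d : R, 0 < d & forall t' : R, 0 <= t' <= 1 -> `|t' - t| < d -> ~ K x t'.
Hypothesis class_eq : forall x t u : R, 0 <= x <= 1 -> K x t -> (K t u <-> K x u).
Hypothesis class_0_1 : ~ K 0 1.

Lemma class_sym (x t : R) : 0 <= x <= 1 -> K x t -> K t x.
Proof. by move=> hx hxt; apply/(class_eq x hx hxt)/class_refl. Qed.

Lemma class_of_common (x r a : R) :
  0 <= x <= 1 -> 0 <= r <= 1 -> K x a -> K r a -> K r x.
Proof.
move=> hx hr hxa hra.
by apply/(class_eq x hr hra)/(class_eq x hx hxa)/class_refl.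
Qed.

Lemma class_has_sup (x : R) : 0 <= x <= 1 -> has_sup (K x).
Proof. by move=> hx; split; [exists x; apply: class_refl | exists 1 => t /class_sub01/andP[]]. Qed.

Lemma class_has_inf (x : R) : 0 <= x <= 1 -> has_inf (K x).
Proof. by move=> hx; split; [exists x; apply: class_refl | exists 0 => t /class_sub01/andP[]]. Qed.

Lemma le_class_sup (x t : R) : 0 <= x <= 1 -> K x t -> t <= sup (K x).
Proof. by move=> hx hxt; apply: sup_upper_bound (class_has_sup hx) _ hxt. Qed.

Lemma class_inf_le (x t : R) : 0 <= x <= 1 -> K x t -> inf (K x) <= t.
Proof. by move=> hx hxt; apply: ge_inf (class_has_inf hx).2 _ hxt. Qed.

Lemma class_sup (x : R) : 0 <= x <= 1 -> K x (sup (K x)).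
Proof.
move=> hx; have hxs := le_class_sup hx (class_refl hx).
have hs1 : sup (K x) <= 1.
  by apply: ge_sup; [exists x; apply: class_refl | move=> t /class_sub01/andP[]].
have hs01 : 0 <= sup (K x) <= 1 by case/andP: hx => x0 _; apply/andP; split; lra.
apply: contrapT => hn; have [d d0 hd] := class_closed hx hs01 hn.
have [e he hlt] := sup_adherent d0 (class_has_sup hx).
apply: (hd e (class_sub01 he) _ he).
by have := le_class_sup hx he; rewrite ltr_norml => ?; apply/andP; split; lra.
Qed.

Lemma class_inf (x : R) : 0 <= x <= 1 -> K x (inf (K x)).
Proof.
move=> hx; have hxi := class_inf_le hx (class_refl hx).
have hi0 : 0 <= inf (K x).
  by apply: lb_le_inf; [exists x; apply: class_refl | move=> t /class_sub01/andP[]].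
have hi01 : 0 <= inf (K x) <= 1 by case/andP: hx => _ x1; apply/andP; split; lra.
apply: contrapT => hn; have [d d0 hd] := class_closed hx hi01 hn.
have [e he hlt] := inf_adherent d0 (class_has_inf hx).
apply: (hd e (class_sub01 he) _ he).
by have := class_inf_le hx he; rewrite ltr_norml => ?; apply/andP; split; lra.
Qed.

(* [x'] is the midpoint of the gap between the class of [r] and that of [y]. *)
Lemma shrink_from_left (x y r : R) : 0 <= x -> x < y -> y <= 1 -> 0 <= r <= 1 ->
  K r x -> ~ K r y ->
  exists2 x', x <= x' < y /\ ~ K x' y & forall t, x' <= t -> t <= y -> ~ K r t.
Proof.
move=> x0 xy y1 hr hrx hry.
have hy : 0 <= y <= 1 by apply/andP; split; lra.
have hb := class_sup hr; have hxb := le_class_sup hr hrx.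
have hby : sup (K r) < y.
  by rewrite ltNge; apply/negP => hyb; apply: hry (class_convex hrx hb (ltW xy) hyb).
have ha := class_inf hy; have hay := class_inf_le hy (class_refl hy).
have hba : sup (K r) < inf (K y).
  rewrite ltNge; apply/negP => hab; apply: hry (class_of_common hy hr _ hb).
  by apply: class_convex ha (class_refl hy) hab _; lra.
exists ((inf (K y) + sup (K r)) / 2); first split.
- by apply/andP; split; lra.
- move=> hk; have h01 : 0 <= (inf (K y) + sup (K r)) / 2 <= 1.
    by have /andP[? ?] := class_sub01 hb; apply/andP; split; lra.
  by have := class_inf_le hy (class_sym h01 hk); lra.
- by move=> t ht _ hk; have := le_class_sup hr hk; lra.
Qed.

Lemma shrink_from_right (x y r z : R) : 0 <= x -> x < y -> y <= 1 -> 0 <= r <= 1 ->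
  ~ K r x -> x <= z -> z <= y -> K r z ->
  exists2 y', x < y' <= y /\ ~ K x y' & forall t, x <= t -> t <= y' -> ~ K r t.
Proof.
move=> x0 xy y1 hr hrx xz zy hrz.
have hx : 0 <= x <= 1 by apply/andP; split; lra.
have ha := class_inf hr; have haz := class_inf_le hr hrz.
have hxa : x < inf (K r).
  by rewrite ltNge; apply/negP => hax; apply: hrx (class_convex ha hrz hax xz).
have hb := class_sup hx; have hxb := le_class_sup hx (class_refl hx).
have hba : sup (K x) < inf (K r).
  rewrite ltNge; apply/negP => hab; apply: hrx (class_of_common hx hr _ ha).
  by apply: class_convex (class_refl hx) hb _ hab; lra.
exists ((inf (K r) + sup (K x)) / 2); first split.
- by apply/andP; split; lra.
- by move=> hk; have := le_class_sup hx hk; lra.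
- by move=> t _ ht hk; have := class_inf_le hr hk; lra.
Qed.

Definition separated (xy : R * R) : Prop :=
  [/\ 0 <= xy.1, xy.1 < xy.2, xy.2 <= 1 & ~ K xy.1 xy.2].

Lemma separated_avoiding (xy : R * R) (r : R) : separated xy -> 0 <= r <= 1 ->
  exists2 xy' : R * R, separated xy' /\ xy.1 <= xy'.1 /\ xy'.2 <= xy.2 &
    forall t, xy'.1 <= t -> t <= xy'.2 -> ~ K r t.
Proof.
case: xy => x y [/= x0 xy y1 nxy] hr.
case: (pselect (exists z, [/\ x <= z, z <= y & K r z])); last first.
  by move=> hn; exists (x, y) => //= t xt ty hrt; apply: hn; exists t.
case=> z [xz zy hrz]; case: (pselect (K r x)) => hrx.
- have hry : ~ K r y by move/(class_eq y hr hrx); apply: nxy.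
  have [x' [/andP[xx' x'y] nx'y] hK] := shrink_from_left x0 xy y1 hr hrx hry.
  by exists (x', y) => //; split; [split => //=; lra | rewrite /=; split; lra].
- have [y' [/andP[xy' y'y] nxy'] hK] := shrink_from_right x0 xy y1 hr hrx xz zy hrz.
  by exists (x, y') => //; split; [split => //=; lra | rewrite /=; split; lra].
Qed.

(* Nested intervals, the [n]-th one avoiding the class of [r n]. *)
Lemma point_avoiding_classes (r : nat -> R) (xy : R * R) :
  separated xy -> (forall n, 0 <= r n <= 1) ->
  exists2 p, xy.1 <= p <= xy.2 & forall n, ~ K (r n) p.
Proof.
move=> hxy hr.
have hstep (nab : nat * (R * R)) : exists ab' : R * R, separated nab.2 ->
    (separated ab' /\ nab.2.1 <= ab'.1 /\ ab'.2 <= nab.2.2) /\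
    forall t, ab'.1 <= t -> t <= ab'.2 -> ~ K (r nab.1) t.
  case: (pselect (separated nab.2)) => [hs | hn]; last by exists nab.2.
  by have [ab' h1 h2] := separated_avoiding hs (hr nab.1); exists ab'.
have [g hg] := choice hstep.
pose fix s (n : nat) : R * R := if n is k.+1 then g (k, s k) else xy.
have hsep n : separated (s n) by elim: n => // n ih; exact: (hg (n, s n) ih).1.1.
have hnext n := hg (n, s n) (hsep n).
have hmono n k : (n <= k)%N -> (s n).1 <= (s k).1 /\ (s k).2 <= (s n).2.
  move/subnK <-; elim: (k - n)%N => [|d [ih1 ih2]]; first by rewrite add0n.
  by have [[_ [h1 h2]] _] := hnext (d + n)%N; rewrite addSn; split; lra.
have hcross n k : (s n).1 <= (s k).2.
  have [h1 _] := hmono n _ (leq_maxl n k); have [_ h2] := hmono k _ (leq_maxr n k).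
  by have [_ h3 _ _] := hsep (maxn n k); lra.
pose E : set R := fun t => exists n, t = (s n).1.
have hE0 : E (s 0%N).1 by exists 0%N.
have hsupE : has_sup E by split; [exists (s 0%N).1 | exists (s 0%N).2 => t [n ->]].
have hlo n : (s n).1 <= sup E by apply: sup_upper_bound hsupE _ _; exists n.
have hhi n : sup E <= (s n).2 by apply: ge_sup; [exists (s 0%N).1 | move=> t [k ->]].
exists (sup E); first by apply/andP; split; [exact: (hlo 0%N) | exact: (hhi 0%N)].
by move=> n; apply: (hnext n).2; [exact: (hlo n.+1) | exact: (hhi n.+1)].
Qed.

Lemma inner_separated_pair : exists2 xy : R * R, separated xy & 0 < xy.1 /\ xy.2 < 1.
Proof.
have h01 : 0 <= (1 / 2 : R) <= 1 by apply/andP; split; lra.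
have h0 : 0 <= (0 : R) <= 1 by rewrite lexx ler01.
have h1 : 0 <= (1 : R) <= 1 by rewrite lexx ler01.
have hsmall (d : R) : 0 < d -> exists e : R, [/\ 0 < e, e < d & e <= 1 / 4].
  by move=> d0; case: (lerP d (1 / 2)) => hd; [exists (d / 2) | exists (1 / 4)]; split; lra.
have [n0 | n1] : ~ K (1 / 2) 0 \/ ~ K (1 / 2) 1.
  case: (pselect (K (1 / 2) 0)) => k0; last by left.
  by right => k1; apply/class_0_1/(class_eq 1 h01 k0).2.
- have [d d0 hd] := class_closed h01 h0 n0.
  have [e [e0 ed e4]] := hsmall d d0.
  have e01 : 0 <= e <= 1 by apply/andP; split; lra.
  exists (e, 1 / 2); last by split => /=; lra.
  split => /=; try lra; move/(class_sym e01); apply: hd => //.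
  by rewrite subr0 gtr0_norm.
- have [d d0 hd] := class_closed h01 h1 n1.
  have [e [e0 ed e4]] := hsmall d d0.
  exists (1 / 2, 1 - e); last by split => /=; lra.
  split => /=; try lra; apply: hd; first by apply/andP; split; lra.
  by rewrite addrAC subrr add0r normrN gtr0_norm.
Qed.

(* Otherwise every class would contain a rational, and a point avoiding the classes
   of all rationals would belong to no class. *)
Lemma exists_singleton_class : exists2 p, 0 < p < 1 & forall t, K p t -> t = p.
Proof.
apply: contrapT => hN.
have [xy hxy [x0 y1]] := inner_separated_pair.
pose r (n : nat) : R := if pickle_inv n is Some a then ratr a else 0.
pose r01 (n : nat) : R := if 0 <= r n <= 1 then r n else 0.
have hr01 n : 0 <= r01 n <= 1 by rewrite /r01; case: ifP => // _; rewrite lexx ler01.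
have [p hp hpr] := point_avoiding_classes hxy hr01.
have hp01 : 0 < p < 1 by case: hxy hp => _ _ _ _ /andP[? ?]; apply/andP; split; lra.
have hp01' : 0 <= p <= 1 by case/andP: hp01 => ? ?; apply/andP; split; lra.
have [t hpt htp] : exists2 t, K p t & t != p.
  apply: contrapT => hn; apply: hN; exists p => // t hpt.
  by apply: contrapT => htp; apply: hn; exists t => //; apply/eqP.
have [a hpa] : exists a : rat, K p (ratr a).
  case: (ltgtP p t) => [hlt | hlt | heq]; last by rewrite heq eqxx in htp.
  - have [a] := rat_in_itvoo hlt; rewrite in_itv /= => /andP[h1 h2].
    by exists a; apply: class_convex (class_refl hp01') hpt _ _; apply: ltW.
  - have [a] := rat_in_itvoo hlt; rewrite in_itv /= => /andP[h1 h2].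
    by exists a; apply: class_convex hpt (class_refl hp01') _ _; apply: ltW.
apply: (hpr (pickle a)); apply: class_sym hp01' _.
by rewrite /r01 /r pickleK_inv (class_sub01 hpa).
Qed.

End IntervalPartition.

Lemma path_zip_rel (T : eqType) (e : rel T) (x : T) (s : seq T) :
  path e x s -> forall ab, ab \in zip (x :: s) s -> e ab.1 ab.2.
Proof.
elim: s x => [|y s ih] x //= /andP[exy hp] ab /orP[/eqP -> // | hab].
exact: ih hp ab hab.
Qed.

Lemma strict_mono_gap_ge0 (R : realDomainType) (c : R -> R) (a b : R) :
  0 <= a -> 0 <= b -> (forall x y, 0 <= x -> x < y -> c x < c y) ->
  0 <= (a - b) * (c a - c b) /\ ((a - b) * (c a - c b) = 0 -> a = b).
Proof.
move=> a0 b0 hc; case: (ltgtP a b) => [ab | ba | -> //]; last by rewrite subrr mul0r.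
- have hpos : 0 < (a - b) * (c a - c b).
    by rewrite -mulrNN mulr_gt0 // oppr_gt0 subr_lt0 ?hc.
  by split; [exact: ltW | move=> h0; move: hpos; rewrite h0 ltxx].
- have hpos : 0 < (a - b) * (c a - c b) by rewrite mulr_gt0 // subr_gt0 ?hc.
  by split; [exact: ltW | move=> h0; move: hpos; rewrite h0 ltxx].
Qed.

Lemma sum_delta (R : pzSemiRingType) (m : nat) (a : 'I_m -> R) (k : 'I_m) :
  \sum_(s < m) (s == k)%:R * a s = a k.
Proof. by rewrite (bigD1 k) //= eqxx mul1r big1 ?addr0 // => s /negbTE ->; rewrite mul0r. Qed.

Section Equilibria.
Variables (R : realType) (V : finType) (adj : rel V) (vo vd : V) (m : nat).
Variable C : 'I_m -> V -> V -> R -> R.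
Hypothesis hC : valid_costs adj C.
Local Notation P := (Path adj vo vd).

Lemma od_path_Path (p : P) : od_path adj vo vd (val p).
Proof. by have := ssvalP p; rewrite /od_paths mem_undup mem_filter => /andP[]. Qed.

Lemma pedges_adj (p : P) (e : V * V) : e \in pedges p -> adj e.1 e.2.
Proof.
rewrite /pedges; have := od_path_Path p.
by case: (val p) => [|x s] //= /and4P[_ hp _ _]; apply: path_zip_rel.
Qed.

Lemma pedges_uniq (p : P) : uniq (pedges p).
Proof.
rewrite /pedges; have := od_path_Path p; rewrite /od_path.
by case: (val p) => [|x s] // /and4P[_ _ _ hu]; apply: zip_uniql.
Qed.

Definition mixed_cost (w : 'I_m -> R) (e : V * V) (x : R) : R :=
  \sum_(s < m) w s * C s e.1 e.2 x.

Lemma exp_cost_edges (w : 'I_m -> R) (f : P -> R) (p : P) :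
  exp_cost C w f p = \sum_(e <- pedges p) mixed_cost w e (edge_flow f e.1 e.2).
Proof.
rewrite /exp_cost /path_cost /mixed_cost.
under eq_bigr => s _ do rewrite big_distrr /=.
by rewrite exchange_big.
Qed.

Lemma sum_flow_exp_cost (h f : P -> R) (w : 'I_m -> R) :
  \sum_(p : P) h p * exp_cost C w f p =
  \sum_(e : V * V) edge_flow h e.1 e.2 * mixed_cost w e (edge_flow f e.1 e.2).
Proof.
under eq_bigr => p _ do
  rewrite exp_cost_edges big_uniq ?pedges_uniq // big_mkcond big_distrr /=.
rewrite exchange_big; apply: eq_bigr => e _.
rewrite /edge_flow -surjective_pairing big_distrl /= [RHS]big_mkcond /=.
by apply: eq_bigr => p _; case: ifP; rewrite ?mulr0 ?mul0r.
Qed.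

Lemma edge_flow_ge0 (f : P -> R) (u v : V) : feasible f -> 0 <= edge_flow f u v.
Proof. by move=> [f0 _]; apply: sumr_ge0. Qed.

Lemma edge_flowB (f g : P -> R) (u v : V) :
  edge_flow (fun p => f p - g p) u v = edge_flow f u v - edge_flow g u v.
Proof. by rewrite /edge_flow sumrB. Qed.

Lemma edge_flow_unused (f : P -> R) (e : V * V) :
  ~~ [exists p : P, e \in pedges p] -> edge_flow f e.1 e.2 = 0.
Proof.
move=> hn; rewrite /edge_flow -surjective_pairing big_pred0 // => p.
by apply/negP => hp; move/negP: hn; apply; apply/existsP; exists p.
Qed.

Lemma mixed_cost_strict (w : 'I_m -> R) (e : V * V) :
  (forall s, 0 <= w s) -> 0 < \sum_(s < m) w s -> adj e.1 e.2 ->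
  forall x y, 0 <= x -> x < y -> mixed_cost w e x < mixed_cost w e y.
Proof.
move=> w0 wpos he x y x0 xy; rewrite -subr_gt0 /mixed_cost -sumrB.
have hCe s : C s e.1 e.2 x < C s e.1 e.2 y by have [_ _ ->] := hC s he.
have hterm s : 0 <= w s * C s e.1 e.2 y - w s * C s e.1 e.2 x.
  by rewrite -mulrBr mulr_ge0 // subr_ge0 ltW.
rewrite lt0r sumr_ge0 ?andbT //; apply/eqP => hs0.
move: wpos; rewrite big1 ?ltxx // => s _.
have /eqP := psumr_eq0P (fun s _ => hterm s) hs0 (i := s) isT.
rewrite -mulrBr mulf_eq0 subr_eq0 => /orP[/eqP // | /eqP hyx].
by move: (hCe s); rewrite hyx ltxx.
Qed.

Lemma WE_mean_cost_le (w : 'I_m -> R) (f : P -> R) : is_WE C w f ->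
  forall r : P, \sum_(p : P) f p * exp_cost C w f p <= exp_cost C w f r.
Proof.
move=> [[f0 f1] hf] r.
rewrite -[X in _ <= X]mul1r -f1 big_distrl /=; apply: ler_sum => p _.
have := f0 p; rewrite le0r => /orP[/eqP -> | fp]; first by rewrite !mul0r.
by apply: ler_wpM2l; [exact: ltW | exact: hf].
Qed.

Lemma WE_variational_ineq (w : 'I_m -> R) (f g : P -> R) : is_WE C w f -> feasible g ->
  \sum_(p : P) f p * exp_cost C w f p <= \sum_(p : P) g p * exp_cost C w f p.
Proof.
move=> hf [g0 g1].
rewrite -[X in X <= _]mul1r -g1 big_distrl /=; apply: ler_sum => r _.
by apply: ler_wpM2l => //; apply: WE_mean_cost_le.
Qed.

(* Adding the two variational inequalities gives a sum of nonpositive terms, each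
   of which is nonnegative by strict monotonicity of the edge costs. *)
Lemma WE_edge_flow_unique (w : 'I_m -> R) (f g : P -> R) :
  (forall s, 0 <= w s) -> 0 < \sum_(s < m) w s ->
  is_WE C w f -> is_WE C w g -> forall u v, edge_flow f u v = edge_flow g u v.
Proof.
move=> w0 wpos hf hg.
pose T (e : V * V) := (edge_flow f e.1 e.2 - edge_flow g e.1 e.2) *
   (mixed_cost w e (edge_flow f e.1 e.2) - mixed_cost w e (edge_flow g e.1 e.2)).
have hT : \sum_(e : V * V) T e <= 0.
  have -> : \sum_(e : V * V) T e =
      \sum_(p : P) (f p - g p) * exp_cost C w f p
    - \sum_(p : P) (f p - g p) * exp_cost C w g p.
    rewrite !sum_flow_exp_cost -sumrB.
    by apply: eq_bigr => e _; rewrite /T edge_flowB mulrBr.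
  have := WE_variational_ineq hf hg.1; have := WE_variational_ineq hg hf.1.
  by rewrite !(eq_bigr _ (fun p _ => mulrBl (exp_cost C w _ p) (f p) (g p))) !sumrB; lra.
have hTe e : 0 <= T e /\ (T e = 0 -> edge_flow f e.1 e.2 = edge_flow g e.1 e.2).
  case: (boolP [exists p : P, e \in pedges p]) => [/existsP[p hp] | hex]; last first.
    by rewrite /T !edge_flow_unused // subrr mul0r.
  apply: strict_mono_gap_ge0; [exact: edge_flow_ge0 hf.1 | exact: edge_flow_ge0 hg.1 |].
  exact: mixed_cost_strict w0 wpos (pedges_adj hp).
have hT0 : \sum_(e : V * V) T e = 0.
  by apply/eqP; rewrite eq_le hT sumr_ge0 // => e _; case: (hTe e).
have hT0e := psumr_eq0P (fun e _ => (hTe e).1) hT0.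
by move=> u v; apply: (hTe (u, v)).2; exact: hT0e.
Qed.

Lemma exp_cost_edge_flow_eq (w : 'I_m -> R) (f g : P -> R) (p : P) :
  (forall u v, edge_flow f u v = edge_flow g u v) -> exp_cost C w f p = exp_cost C w g p.
Proof. by move=> he; rewrite !exp_cost_edges; apply: eq_bigr => e _; rewrite he. Qed.

(* [f] has the same mean cost as [g] and never uses a path cheaper than that mean. *)
Lemma WE_edge_flow_eq (w : 'I_m -> R) (f g : P -> R) : feasible f ->
  (forall u v, edge_flow f u v = edge_flow g u v) -> is_WE C w g -> is_WE C w f.
Proof.
move=> [f0 f1] he hg; split => // p fp r.
rewrite !(exp_cost_edge_flow_eq w _ he).
set mu := \sum_(p : P) g p * exp_cost C w g p.
have hgap p' : 0 <= f p' * (exp_cost C w g p' - mu).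
  by rewrite mulr_ge0 // subr_ge0 WE_mean_cost_le.
have hz : \sum_(p : P) f p * (exp_cost C w g p - mu) = 0.
  under eq_bigr => p' _ do rewrite mulrBr.
  rewrite sumrB -big_distrl /= f1 mul1r /mu !sum_flow_exp_cost.
  by rewrite (eq_bigr _ (fun e _ => congr1 (fun x => x * _) (he _ _))) subrr.
have /eqP := psumr_eq0P (fun p' _ => hgap p') hz (i := p) isT.
rewrite mulf_eq0 (gt_eqF fp) subr_eq0 => /eqP ->.
exact: WE_mean_cost_le.
Qed.

Lemma exp_cost_scale (w w' : 'I_m -> R) (k : R) (f : P -> R) (p : P) :
  (forall s, w s = k * w' s) -> exp_cost C w f p = k * exp_cost C w' f p.
Proof.
by move=> hw; rewrite /exp_cost big_distrr /=; apply: eq_bigr => s _; rewrite hw mulrA.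
Qed.

Lemma WE_scale (w w' : 'I_m -> R) (k : R) (f : P -> R) :
  0 < k -> (forall s, w s = k * w' s) -> is_WE C w f -> is_WE C w' f.
Proof.
move=> k0 hw [hf hwe]; split => // p fp r.
by have := hwe p fp r; rewrite !(exp_cost_scale _ _ hw) ler_pM2l.
Qed.

Lemma WE_eq_weights (w w' : 'I_m -> R) (f : P -> R) :
  w =1 w' -> is_WE C w f -> is_WE C w' f.
Proof. by move=> hw; apply: (@WE_scale w w' 1) => // s; rewrite mul1r. Qed.

Lemma WE_of_common (w w' : 'I_m -> R) (f g : P -> R) :
  (forall s, 0 <= w s) -> 0 < \sum_(s < m) w s ->
  is_WE C w g -> is_WE C w' g -> is_WE C w f -> is_WE C w' f.
Proof.
move=> w0 wpos hg hg' hf.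
exact: WE_edge_flow_eq hf.1 (WE_edge_flow_unique w0 wpos hf hg) hg'.
Qed.

Lemma state_dist_ge0 (s : 'I_m) : forall k, 0 <= state_dist R s k.
Proof. by move=> k; rewrite ler0n. Qed.

Lemma sum_state_dist (s : 'I_m) : \sum_(k < m) state_dist R s k = 1.
Proof. by under eq_bigr do rewrite -[state_dist _ _ _]mulr1; rewrite sum_delta. Qed.

Lemma WE_state_of_common (s s' : 'I_m) (f g : P -> R) :
  WE_state C s g -> WE_state C s' g -> WE_state C s f -> WE_state C s' f.
Proof. by apply: WE_of_common; [exact: state_dist_ge0 | rewrite sum_state_dist ltr01]. Qed.

End Equilibria.


Section Mixtures.
Variables (R : realType) (V : finType) (adj : rel V) (vo vd : V) (m : nat).
Variable C : 'I_m -> V -> V -> R -> R.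
Hypothesis hC : valid_costs adj C.
Local Notation P := (Path adj vo vd).
Variables (j u : 'I_m).

Definition mix (t : R) : 'I_m -> R := fun s => (s == u)%:R * t + (s == j)%:R * (1 - t).

Lemma mix_ge0 (t : R) : 0 <= t <= 1 -> forall s, 0 <= mix t s.
Proof. by move=> /andP[t0 t1] s; rewrite addr_ge0 // mulr_ge0 // subr_ge0. Qed.

Lemma sum_mix (t : R) : \sum_(s < m) mix t s = 1.
Proof. by rewrite big_split /= !sum_delta subrKC. Qed.

Lemma mix_0 : mix 0 =1 state_dist R j.
Proof. by move=> s; rewrite /mix /state_dist mulr0 add0r subr0 mulr1. Qed.

Lemma mix_1 : mix 1 =1 state_dist R u.
Proof. by move=> s; rewrite /mix /state_dist subrr mulr0 addr0 mulr1. Qed.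

Lemma exp_cost_mix (t : R) (f : P -> R) (p : P) :
  exp_cost C (mix t) f p = t * path_cost C u f p + (1 - t) * path_cost C j f p.
Proof.
rewrite /exp_cost; under eq_bigr => s _ do rewrite mulrDl -!mulrA.
by rewrite big_split /= !sum_delta.
Qed.

Lemma exp_cost_mix_gap (t : R) (f : P -> R) (p r : P) :
  exp_cost C (mix t) f p - exp_cost C (mix t) f r =
  t * ((path_cost C u f p - path_cost C u f r) - (path_cost C j f p - path_cost C j f r))
  + (path_cost C j f p - path_cost C j f r).
Proof. by rewrite !exp_cost_mix; ring. Qed.

Lemma WE_mix_convex (f : P -> R) (t1 t2 t : R) :
  is_WE C (mix t1) f -> is_WE C (mix t2) f -> t1 <= t -> t <= t2 -> is_WE C (mix t) f.
Proof.
move=> [hf h1] [_ h2] t1t tt2; split => // p fp r.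
have e1 := h1 p fp r; have e2 := h2 p fp r.
rewrite -subr_le0 exp_cost_mix_gap in e1; rewrite -subr_le0 exp_cost_mix_gap in e2.
rewrite -subr_le0 exp_cost_mix_gap.
set a := (_ - _) - _ in e1 e2 *; set b := path_cost C j f p - _ in e1 e2 *.
case: (lerP 0 a) => ha.
- have : t * a <= t2 * a by apply: ler_wpM2r.
  lra.
- have : t * a <= t1 * a by rewrite ler_wnM2r // ltW.
  lra.
Qed.

Lemma not_WE_mix_open (f : P -> R) (t : R) : feasible f -> ~ is_WE C (mix t) f ->
  exists2 d : R, 0 < d & forall t', `|t' - t| < d -> ~ is_WE C (mix t') f.
Proof.
move=> hf nWE.
have [p [r [fp hgt]]] : exists p r, 0 < f p /\ exp_cost C (mix t) f r < exp_cost C (mix t) f p.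
  apply: contrapT => hn; apply: nWE; split => // p fp r.
  by rewrite leNgt; apply/negP => hlt; apply: hn; exists p, r.
move: hgt; rewrite -subr_gt0 exp_cost_mix_gap.
set a := (_ - _) - _; set b := path_cost C j f p - _ => hg.
have ha1 : 0 < `|a| + 1 by rewrite ltr_wpDl.
exists ((t * a + b) / (`|a| + 1)); first by rewrite divr_gt0.
move=> t' hd [_ hWE]; have := hWE p fp r; rewrite -subr_le0 exp_cost_mix_gap -/a -/b.
move: hd; rewrite ltr_pdivlMr // => hd.
have hn1 : - (`|t' - t| * `|a|) <= (t' - t) * a.
  by rewrite -normrM lerNl -normrN ler_norm.
have hn2 : `|t' - t| * `|a| <= `|t' - t| * (`|a| + 1) by rewrite ler_wpM2l // lerDl.
have -> : t' * a + b = (t * a + b) + (t' - t) * a by ring.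
lra.
Qed.

Lemma WE_mix_common (t t' : R) (f g : P -> R) : 0 <= t <= 1 ->
  is_WE C (mix t) g -> is_WE C (mix t) f -> is_WE C (mix t') g -> is_WE C (mix t') f.
Proof.
move=> ht hg hf hg'; apply: (WE_of_common hC (mix_ge0 ht) _ hg hg' hf).
by rewrite sum_mix ltr01.
Qed.

Lemma WE_state_iff_of_mix01 (g : P -> R) : is_WE C (mix 0) g -> is_WE C (mix 1) g ->
  forall f : P -> R, WE_state C j f <-> WE_state C u f.
Proof.
move=> /(WE_eq_weights mix_0) hj /(WE_eq_weights mix_1) hu f.
by split; [exact: (WE_state_of_common hC hj hu) | exact: (WE_state_of_common hC hu hj)].
Qed.

Lemma mix_rescale (a b : R) (s : 'I_m) : a + b != 0 ->
  (s == u)%:R * a + (s == j)%:R * b = (a + b) * mix (a / (a + b)) s.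
Proof. by move=> hab; rewrite /mix; field. Qed.

Definition rigid_mix (p : R) : Prop := forall f : P -> R, is_WE C (mix p) f ->
  forall t, 0 <= t <= 1 -> is_WE C (mix t) f -> t = p.

(* Existence of equilibria is not assumed, whence the first alternative.  Otherwise,
   choosing an equilibrium [F x] of each [mix x], the sets [{t | F x is an equilibrium
   of mix t}] partition [[0, 1]] into closed intervals, because all equilibria of one
   mixture share their edge flows; a singleton class is a rigid mixture. *)
Lemma exists_rigid_mix :
  ~ (forall f : P -> R, WE_state C j f <-> WE_state C u f) ->
  exists2 p, 0 <= p <= 1 & (forall f : P -> R, ~ is_WE C (mix p) f) \/ (0 < p < 1 /\ rigid_mix p).
Proof.
move=> hne.
case: (pselect (exists2 p, 0 <= p <= 1 & forall f : P -> R, ~ is_WE C (mix p) f)).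
  by case=> p hp hn; exists p => //; left.
move=> hex.
have hF t : exists f : P -> R, 0 <= t <= 1 -> is_WE C (mix t) f.
  case: (pselect (0 <= t <= 1)) => ht; last by exists (fun _ => 0).
  by apply: contrapT => hn; apply: hex; exists t => // f hf; apply: hn; exists f.
have [F hFt] := choice hF.
pose K (x t : R) := 0 <= t <= 1 /\ is_WE C (mix t) (F x).
have K_sub01 x t : K x t -> 0 <= t <= 1 by case.
have K_refl x : 0 <= x <= 1 -> K x x by move=> hx; split => //; apply: hFt.
have K_convex x t1 t2 t : K x t1 -> K x t2 -> t1 <= t -> t <= t2 -> K x t.
  move=> [/andP[? ?] h1] [/andP[? ?] h2] ? ?; split; last exact: WE_mix_convex h1 h2 _ _.
  by apply/andP; split; lra.
have K_closed x t : 0 <= x <= 1 -> 0 <= t <= 1 -> ~ K x t ->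
    exists2 d : R, 0 < d & forall t', 0 <= t' <= 1 -> `|t' - t| < d -> ~ K x t'.
  move=> hx ht nK; have nWE : ~ is_WE C (mix t) (F x) by move=> hWE; apply: nK.
  have [d d0 hd] := not_WE_mix_open (hFt x hx).1 nWE.
  by exists d => // t' _ /hd ? [].
have K_eq x t t' : 0 <= x <= 1 -> K x t -> (K t t' <-> K x t').
  move=> hx [ht hWE]; have hWt := hFt t ht.
  by split=> -[ht' hWE']; split => //;
    [exact: WE_mix_common ht hWt hWE hWE' | exact: WE_mix_common ht hWE hWt hWE'].
have K_0_1 : ~ K 0 1.
  have h0 : 0 <= (0 : R) <= 1 by rewrite lexx ler01.
  by case=> _ /(WE_state_iff_of_mix01 (hFt 0 h0)) /hne.
have [p /andP[p0 p1] hp] := exists_singleton_class K_sub01 K_refl K_convex K_closed K_eq K_0_1.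
have hp01 : 0 <= p <= 1 by apply/andP; split; apply: ltW.
exists p => //; right; split => [|f hf t ht hWE]; first by apply/andP.
by apply: hp; split => //; exact: WE_mix_common hp01 hf (hFt p hp01) hWE.
Qed.

End Mixtures.

Section Signals.
Variables (R : realType) (V : finType) (adj : rel V) (vo vd : V) (m : nat).
Variable C : 'I_m -> V -> V -> R -> R.
Local Notation P := (Path adj vo vd).
Variables (z : nat) (Phi : 'M[R]_(z, m)) (q : 'I_m -> R).

Lemma cost_gap_exp_cost (ftil : 'I_z -> P -> R) (psi : 'I_m -> R) (u : 'I_z) (p r : P) :
  cost_gap C Phi ftil psi u p r =
  exp_cost C (fun s => Phi u s * psi s) (ftil u) p
  - exp_cost C (fun s => Phi u s * psi s) (ftil u) r.
Proof. by rewrite /cost_gap /exp_cost -sumrB; apply: eq_bigr => s _; ring. Qed.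

Lemma in_Q_WE (ftil : 'I_z -> P -> R) (psi : 'I_m -> R) (u : 'I_z) :
  in_Q C Phi q ftil psi -> 0 < sig_prob Phi q u -> feasible (ftil u) ->
  is_WE C (fun s => Phi u s * psi s) (ftil u).
Proof.
move=> [_ hQ] hsp hf; split => // p fp r; rewrite -subr_le0 -cost_gap_exp_cost.
have [h1 h2] := hQ u hsp p r fp.
by have := hf.1 r; rewrite le0r => /orP[/eqP /h2 | /h1 ->].
Qed.

Lemma cost_gap_posterior (ftil : 'I_z -> P -> R) (u : 'I_z) (p r : P) :
  0 < sig_prob Phi q u ->
  cost_gap C Phi ftil q u p r = sig_prob Phi q u *
    (exp_cost C (posterior Phi q u) (ftil u) p - exp_cost C (posterior Phi q u) (ftil u) r).
Proof.
move=> hsp; have hw s : Phi u s * q s = sig_prob Phi q u * posterior Phi q u s.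
  by rewrite /posterior mulrCA divff ?mulr1 // gt_eqF.
by rewrite cost_gap_exp_cost mulrBr !(exp_cost_scale C (ftil u) _ hw).
Qed.

Lemma prior_in_Q (ftil : 'I_z -> P -> R) :
  is_dist q -> observed_flows C Phi q ftil -> in_Q C Phi q ftil q.
Proof.
move=> hq hobs; split => // u hsp p r fp.
have [_ hwe] := hobs u hsp; have hpr := hwe p fp r.
rewrite cost_gap_posterior //; split => [fr | _]; last by rewrite pmulr_rle0 // subr_le0.
have hrp := hwe r fr p.
suff -> : exp_cost C (posterior Phi q u) (ftil u) p = exp_cost C (posterior Phi q u) (ftil u) r.
  by rewrite subrr mulr0.
by apply/eqP; rewrite eq_le hpr hrp.
Qed.

Lemma q_identifying_of_unique :
  is_dist q -> (forall ftil : 'I_z -> P -> R, observed_flows C Phi q ftil ->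
    forall psi : 'I_m -> R, in_Q C Phi q ftil psi -> psi =1 q) ->
  q_identifying adj vo vd C Phi q.
Proof.
move=> hq huniq ftil hobs psi; split; first exact: huniq.
move=> hpsi; have [_ hQq] := prior_in_Q hq hobs; split.
  by split => [s|]; rewrite ?(eq_bigr _ (fun s _ => hpsi s)) ?hpsi; case: hq.
move=> u hsp p r fp; rewrite /cost_gap (eq_bigr _ (fun s _ => congr1 _ (hpsi s))).
exact: hQq.
Qed.

End Signals.

Lemma exists_partner (I T : Type) (W : I -> T -> Prop) (i0 i1 u : I) :
  ~ (forall f, W i0 f <-> W i1 f) ->
  exists2 j, j = i0 \/ j = i1 & ~ (forall f, W j f <-> W u f).
Proof.
move=> h01; case: (pselect (forall f, W i0 f <-> W u f)) => h0u; last by exists i0; [left | ].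
exists i1; first by right.
by move=> h1u; apply: h01 => f; split=> [/(h0u f)/(h1u f) | /(h1u f)/(h0u f)].
Qed.

Lemma dist_eq_of_ratio (R : realType) (m : nat) (psi q : 'I_m -> R) (i0 i1 : 'I_m)
    (J : 'I_m -> 'I_m) :
  is_dist psi -> is_dist q -> (forall s, 0 < q s) -> i1 != i0 ->
  (forall v, v != i0 -> J v != v /\ (J v = i0 \/ J v = i1)) ->
  (forall v, v != i0 -> psi v * q (J v) = psi (J v) * q v) -> psi =1 q.
Proof.
move=> [_ psi1] [_ q1] qpos hi10 hJ hratio.
have hJi1 : J i1 = i0.
  by have [hne [] // hJ1] := hJ i1 hi10; rewrite hJ1 eqxx in hne.
have hroot v : psi v * q i0 = psi i0 * q v.
  case: (eqVneq v i0) => [-> | hv]; first by rewrite mulrC.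
  have := hratio v hv; have [_ [-> // | ->] hv1] := hJ v hv.
  have := hratio i1 hi10; rewrite hJi1 => h1.
  apply: (mulIf (lt0r_neq0 (qpos i1))).
  by rewrite mulrAC hv1 mulrAC h1 mulrAC.
have hpsi0 : psi i0 = q i0.
  have : \sum_(v < m) psi v * q i0 = \sum_(v < m) psi i0 * q v.
    by apply: eq_bigr => v _; apply: hroot.
  by rewrite -big_distrl -big_distrr /= psi1 q1 mul1r mulr1.
by move=> v; apply: (mulIf (lt0r_neq0 (qpos i0))); rewrite hroot hpsi0 mulrC.
Qed.

Section Scheme.
Variables (R : realType) (V : finType) (adj : rel V) (vo vd : V) (m : nat).
Variable C : 'I_m -> V -> V -> R -> R.
Local Notation P := (Path adj vo vd).
Variables (q : 'I_m -> R) (i0 : 'I_m) (J : 'I_m -> 'I_m) (pp : 'I_m -> R).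
Hypothesis hq : is_dist q.
Hypothesis q_gt0 : forall s, 0 < q s.
Hypothesis J_neq : forall v, v != i0 -> J v != v.
Hypothesis pp01 : forall v, v != i0 -> 0 <= pp v <= 1.

(* Signal [v != i0] is sent only in states [v] and [J v], with probabilities
   chosen so that its posterior is [mix (J v) v (pp v)]; the division by [m]
   keeps every column sum below [1], and signal [i0] takes up the rest. *)
Definition weight_v (v : 'I_m) : R := q (J v) * pp v / m%:R.
Definition weight_J (v : 'I_m) : R := q v * (1 - pp v) / m%:R.

Definition weight (v s : 'I_m) : R :=
  if v == i0 then 0 else (s == v)%:R * weight_v v + (s == J v)%:R * weight_J v.

Definition scheme : 'M[R]_(m, m) :=
  \matrix_(v, s) if v == i0 then 1 - \sum_(w < m) weight w s else weight v s.

Lemma m_gt0 : 0 < m%:R :> R.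
Proof. by rewrite ltr0n (leq_ltn_trans _ (ltn_ord i0)). Qed.

Lemma q_le1 (s : 'I_m) : q s <= 1.
Proof.
by case: hq => q0 <-; rewrite (bigD1 s) //= lerDl sumr_ge0.
Qed.

Lemma weight_ge0 (v s : 'I_m) : 0 <= weight v s.
Proof.
rewrite /weight; case: ifP => // /negbT hv; have /andP[p0 p1] := pp01 hv.
have hm : 0 <= m%:R^-1 :> R by rewrite invr_ge0 ler0n.
by rewrite addr_ge0 // mulr_ge0 // ?mulr_ge0 // ?subr_ge0 // ltW.
Qed.

Lemma weight_le (v s : 'I_m) : weight v s <= m%:R^-1.
Proof.
rewrite /weight; case: ifP => [_ | /negbT hv]; first by rewrite invr_ge0 ltW // m_gt0.
have /andP[p0 p1] := pp01 hv; have hm : 0 < m%:R^-1 :> R by rewrite invr_gt0 m_gt0.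
have := q_le1 v; have := q_le1 (J v); have := q_gt0 v; have := q_gt0 (J v) => ? ? ? ?.
have hv1 : q (J v) * pp v <= 1 by apply: mulr_ile1; lra.
have hJ1 : q v * (1 - pp v) <= 1 by apply: mulr_ile1; lra.
rewrite /weight_v /weight_J; case: (eqVneq s v) => [-> | _].
  rewrite eq_sym (negbTE (J_neq hv)) mulr1n mulr0n mul1r mul0r addr0.
  by apply: ler_piMl => //; apply: ltW.
rewrite mulr0n mul0r add0r; case: eqP => _; last by rewrite mulr0n mul0r ltW.
by rewrite mulr1n mul1r; apply: ler_piMl => //; apply: ltW.
Qed.

Lemma scheme_col_stochastic : col_stochastic scheme.
Proof.
have hsum s : \sum_(w < m) weight w s <= 1.
  apply: le_trans (ler_sum _ (fun w _ => weight_le w s)) _.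
  by rewrite sumr_const card_ord -[_ *+ m]mulr_natr mulVf ?gt_eqF ?m_gt0.
split => [v s | s]; rewrite ?mxE; first by case: ifP => _; rewrite ?subr_ge0 ?hsum ?weight_ge0.
rewrite (bigD1 i0) //= mxE eqxx (eq_bigr (weight^~ s)) => [|v /negbTE hv].
  by rewrite [X in _ - X](bigD1 i0) //= /weight eqxx add0r subrK.
by rewrite mxE hv.
Qed.

Lemma scheme_mulr (c : 'I_m -> R) (v s : 'I_m) : v != i0 ->
  scheme v s * c s =
  (s == v)%:R * (weight_v v * c v) + (s == J v)%:R * (weight_J v * c (J v)).
Proof.
move=> hv; rewrite mxE /weight (negbTE hv) mulrDl -!mulrA.
by congr (_ + _); case: eqP => [-> | _]; rewrite ?mul0r.
Qed.

Lemma sig_prob_scheme (v : 'I_m) : v != i0 -> sig_prob scheme q v = q v * q (J v) / m%:R.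
Proof.
move=> hv; rewrite /sig_prob; under eq_bigr do rewrite scheme_mulr //.
rewrite big_split /= !sum_delta /weight_v /weight_J.
by field; rewrite gt_eqF ?m_gt0.
Qed.

Lemma posterior_scheme (v : 'I_m) : v != i0 -> posterior scheme q v =1 mix (J v) v (pp v).
Proof.
move=> hv s; rewrite /posterior sig_prob_scheme // scheme_mulr // /mix /weight_v /weight_J.
by field; rewrite !gt_eqF ?m_gt0.
Qed.

Hypothesis rigid : forall v, v != i0 ->
  (forall f : P -> R, ~ is_WE C (mix (J v) v (pp v)) f) \/
  (0 < pp v < 1 /\ rigid_mix adj vo vd C (J v) v (pp v)).

(* The observed flow for [v] is an equilibrium both for the posterior
   [mix (J v) v (pp v)] and, by [in_Q], for a rescaling of some [mix (J v) v t];
   rigidity forces [t = pp v], which is the ratio equation. *)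
Lemma in_Q_scheme_ratio (ftil : 'I_m -> P -> R) (psi : 'I_m -> R) :
  observed_flows C scheme q ftil -> in_Q C scheme q ftil psi ->
  forall v, v != i0 -> psi v * q (J v) = psi (J v) * q v.
Proof.
move=> hobs hQ v hv; have [[psi0 _] _] := hQ.
have hsp : 0 < sig_prob scheme q v by rewrite sig_prob_scheme // divr_gt0 ?mulr_gt0 ?m_gt0.
have hWE := hobs v hsp; have hmix := WE_eq_weights (posterior_scheme hv) hWE.
have [nWE | [/andP[p0 p1] hrig]] := rigid hv; first by case: (nWE _ hmix).
have wv0 : 0 < weight_v v by rewrite divr_gt0 ?mulr_gt0 ?m_gt0.
have wJ0 : 0 < weight_J v by rewrite divr_gt0 ?mulr_gt0 ?subr_gt0 ?m_gt0.
set a := weight_v v * psi v; set b := weight_J v * psi (J v).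
have a0 : 0 <= a by rewrite /a mulr_ge0 // ltW.
have b0 : 0 <= b by rewrite /b mulr_ge0 // ltW.
case: (eqVneq (a + b) 0) => hab.
  have hpv : psi v = 0 by apply: (mulfI (lt0r_neq0 wv0)); rewrite mulr0 -/a; lra.
  have hpJ : psi (J v) = 0 by apply: (mulfI (lt0r_neq0 wJ0)); rewrite mulr0 -/b; lra.
  by rewrite hpv hpJ !mul0r.
have ht : 0 <= a / (a + b) <= 1.
  by rewrite divr_ge0 ?addr_ge0 //= ler_pdivrMr ?mul1r ?lerDl // lt_def hab addr_ge0.
have hWt : is_WE C (mix (J v) v (a / (a + b))) (ftil v).
  apply: (WE_scale (k := a + b)) (in_Q_WE hQ hsp hWE.1) => [|s].
    by rewrite lt_def hab addr_ge0.
  by rewrite scheme_mulr // -mix_rescale.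
have e : pp v * (a + b) = a by rewrite -(hrig _ hmix _ ht hWt) [_ * (a + b)]divfK.
have hK : pp v * (1 - pp v) / m%:R != 0.
  by rewrite gt_eqF // divr_gt0 ?mulr_gt0 ?subr_gt0 ?m_gt0.
apply/eqP; rewrite -subr_eq0; apply/eqP/(mulfI hK); rewrite mulr0.
have -> : pp v * (1 - pp v) / m%:R * (psi v * q (J v) - psi (J v) * q v) = a - pp v * (a + b).
  by rewrite /a /b /weight_v /weight_J; ring.
by rewrite e subrr.
Qed.

End Scheme.

Unset Implicit Arguments.

Theorem proposition1 (R : realType) (V : finType) (adj : rel V) (vo vd : V)
  (m : nat) (hm : (1 < m)%N) (C : 'I_m -> V -> V -> R -> R)
  (hC : valid_costs adj C)
  (q : 'I_m -> R) (hq : is_dist q) (hqpos : forall s, 0 < q s)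
  (hW : ~ (forall f : Path adj vo vd -> R,
            WE_state C (theta1 hm) f <-> WE_state C (theta2 hm) f)) :
  exists Phi : 'M[R]_(m, m), col_stochastic Phi /\ q_identifying adj vo vd C Phi q.
Proof.
set i0 := theta1 hm; set i1 := theta2 hm.
have hi10 : i1 != i0 by [].
have hdata u : exists d : 'I_m * R, u != i0 ->
    [/\ d.1 != u, d.1 = i0 \/ d.1 = i1, 0 <= d.2 <= 1 &
      (forall f : Path adj vo vd -> R, ~ is_WE C (mix d.1 u d.2) f) \/
      (0 < d.2 < 1 /\ rigid_mix adj vo vd C d.1 u d.2)].
  have [j hj hju] := exists_partner u hW.
  have [p hp hpr] := exists_rigid_mix hC hju.
  by exists (j, p) => _; split => //; apply/eqP => /= eju; apply: hju => f; rewrite eju.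
have [D hD] := choice hdata.
pose J v := (D v).1; pose pp v := (D v).2.
have hJ v : v != i0 -> J v != v by move/hD => [].
have hpp v : v != i0 -> 0 <= pp v <= 1 by move/hD => [].
have hrig v : v != i0 ->
    (forall f : Path adj vo vd -> R, ~ is_WE C (mix (J v) v (pp v)) f) \/
    (0 < pp v < 1 /\ rigid_mix adj vo vd C (J v) v (pp v)) by move/hD => [_ _ _].
exists (scheme q i0 J pp); split; first exact: (scheme_col_stochastic hq hqpos hJ hpp).
apply: q_identifying_of_unique => // ftil hobs psi hQ.
apply: (dist_eq_of_ratio (J := J) hQ.1 hq hqpos hi10) => [v /hD[? ? _ _] // | ].
exact: (in_Q_scheme_ratio hqpos hrig hobs hQ).
Qed.
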